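(* Let $X$ be a finite set, $k$ an integer with $1\le k\le|X|-1$, $\mathfrak{C}$ a family of choice functions for $\binom{X}{k}$ and $\mathcal{F}$ the set of (not necessarily simple) averaging functions for $\mathfrak{C}$. Assume $r=r(\mathcal{F})$ satisfies $4\le r<\infty$. Then (1) for every $f\in\mathcal{F}_{[r]}$ there is $\ell(f)\in\{1,\dots,r\}$ such that for every $Y\in\binom{X}{k}$ and every $\bar a\in Y^r$ which is not one-to-one, $f_Y(\bar a)=a_{\ell(f)}$; and (2) $r\le k$.
   Context: $\binom{X}{k}=\{Y\subseteq X:|Y|=k\}$; choice functions satisfy $c(Y)\in Y$. $\mathcal{F}_{[r]}$ is the set of families $f=\langle f_Y:Y\in\binom{X}{k}\rangle$ with $f_Y:Y^r\to Y$, $f_Y(x_1,\dots,x_r)\in\{x_1,\dots,x_r\}$, such that for all $c_1,\dots,c_r\in\mathfrak{C}$, $Y\mapsto f_Y(c_1(Y),\dots,c_r(Y))$ is in $\mathfrak{C}$; $\mathcal{F}=\bigcup_r\mathcal{F}_{[r]}$. $f\in\mathcal{F}_{[r]}$ is a monarchy if for some $t$, $f_Y(\bar x)=x_t$ for all $Y$ and $\bar x\in Y^r$. $r(\mathcal{F})=\min\{r\ge2:\text{some } f\in\mathcal{F}_{[r]}\text{ is not a monarchy}\}$. Standing assumption: every simple $f\in\mathcal{F}$ (with $f_Y$ the restriction of a single function independent of $Y$) is a monarchy. *)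

From mathcomp Require Import all_boot.
Set Implicit Arguments. Unset Strict Implicit. Unset Printing Implicit Defensive.

Definition kset (X : finType) (k : nat) := {Y : {set X} | #|Y| == k}.

Definition cfun (X : finType) (k : nat) := {ffun kset X k -> X}.

Definition is_choice (X : finType) (k : nat) (c : cfun X k) : Prop :=
  forall Y : kset X k, c Y \in val Y.

(* A family f = <f_Y : Y in binom(X,k)> of r-ary functions; f Y is only
   relevant on tuples all of whose entries lie in Y (i.e. on Y^r). *)
Definition rfam (X : finType) (k r : nat) := kset X k -> r.-tuple X -> X.

Definition in_pow (X : finType) (Y : {set X}) (r : nat) (x : r.-tuple X) :=
  forall i : 'I_r, tnth x i \in Y.

Definition in_F (X : finType) (k : nat) (C : pred (cfun X k)) (r : nat)
  (f : rfam X k r) : Prop :=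
  (forall (Y : kset X k) (x : r.-tuple X), in_pow (val Y) x -> f Y x \in x) /\
  (forall c : 'I_r -> cfun X k, (forall i, C (c i)) ->
     C [ffun Y => f Y [tuple c i Y | i < r]]).

Definition monarchy (X : finType) (k r : nat) (f : rfam X k r) : Prop :=
  exists t : 'I_r, forall (Y : kset X k) (x : r.-tuple X),
    in_pow (val Y) x -> f Y x = tnth x t.

Definition simple (X : finType) (k r : nat) (f : rfam X k r) : Prop :=
  exists g : r.-tuple X -> X, forall (Y : kset X k) (x : r.-tuple X),
    in_pow (val Y) x -> f Y x = g x.

Definition is_rF (X : finType) (k : nat) (C : pred (cfun X k)) (r : nat) : Prop :=
  2 <= r /\
  (exists f : rfam X k r, in_F C f /\ ~ monarchy f) /\
  (forall r', 2 <= r' -> r' < r ->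
     forall f : rfam X k r', in_F C f -> monarchy f).

From mathcomp Require Import all_boot.
Set Implicit Arguments. Unset Strict Implicit.

(* Identifying two coordinates a, b of some f in F_[r] gives an element of
   F_[r-1], which is a monarchy by minimality of r; so on the diagonal
   x_a = x_b, f is the projection onto some coordinate t(a, b). Some Y holds
   two points u <> v (otherwise every f would be a monarchy), and evaluating f
   on the tuple that is u on S and v off S shows that t(a, b) and t(c, d) lie
   on the same side of S whenever each pair does. For disjoint pairs this
   yields a pair {i, j} with l = t(i, j) outside it; then t(a, b) = l for
   every pair avoiding l, and, going through a pair disjoint from {l, b}
   (here r >= 4 is used), also for the pairs {l, b}.
   If r > k, no tuple of Y^r is one-to-one, so (1) would make f a monarchy;
   hence (2). *)

Section Minors.

Variables (X : finType) (k : nat) (C : pred (cfun X k)).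

Definition minor r n (f : rfam X k r) (h : 'I_r -> 'I_n) : rfam X k n :=
  fun Y y => f Y [tuple tnth y (h p) | p < r].

Lemma in_F_minor r n (f : rfam X k r) (h : 'I_r -> 'I_n) :
  in_F C f -> in_F C (minor f h).
Proof.
case=> [f_sel f_closed]; split=> [Y y y_in|c Cc].
- have x_in : in_pow (val Y) [tuple tnth y (h p) | p < r].
    by move=> p; rewrite tnth_mktuple.
  rewrite /minor; case/tnthP: (f_sel Y _ x_in) => p ->.
  by rewrite tnth_mktuple mem_tnth.
- have -> : [ffun Y => minor f h Y [tuple c i Y | i < n]] =
            [ffun Y => f Y [tuple c (h p) Y | p < r]].
    apply/ffunP => Y; rewrite !ffunE; congr (f Y _).
    by apply: eq_from_tnth => p; rewrite !tnth_mktuple.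
  exact: f_closed.
Qed.

Definition diag_monarch r (f : rfam X k r) (a b t : 'I_r) : Prop :=
  forall (Y : kset X k) (x : r.-tuple X), in_pow (val Y) x ->
    tnth x a = tnth x b -> f Y x = tnth x t.

Lemma diag_monarch_sym r (f : rfam X k r) (a b t : 'I_r) :
  diag_monarch f a b t -> diag_monarch f b a t.
Proof. by move=> fab Y x x_in /esym; apply: fab. Qed.

Lemma exists_diag_monarch n (f : rfam X k n.+1) (a b : 'I_n.+1) :
  (forall g : rfam X k n, in_F C g -> monarchy g) ->
  in_F C f -> a != b -> exists t, diag_monarch f a b t.
Proof.
move=> monF Ff neq_ab.
have merged_neq p : b != (if p == b then a else p).
  by case: (eqVneq p b) => [_|]; rewrite 1?eq_sym.
pose h p := sval (unlift_some (merged_neq p)).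
have lift_h p : lift b (h p) = if p == b then a else p.
  by rewrite /h; case: (unlift_some _) => q /= <-.
have [t mon_t] := monF _ (in_F_minor h Ff).
exists (lift b t) => Y x x_in xab.
pose y := [tuple tnth x (lift b q) | q < n].
have y_in : in_pow (val Y) y by move=> q; rewrite tnth_mktuple.
transitivity (minor f h Y y); last by rewrite mon_t // tnth_mktuple.
congr (f Y _); apply: eq_from_tnth => p.
by rewrite !tnth_mktuple lift_h; case: eqVneq => [->|].
Qed.

End Minors.

Lemma two_outside_pair r (a b : 'I_r) : 3 < r ->
  exists c d : 'I_r, [/\ c != d, a \notin [set c; d] & b \notin [set c; d]].
Proof.
move=> r_gt3; have : 1 < #|~: [set a; b]|.
  rewrite -(leq_add2l #|[set a; b]|) cardsC card_ord cards2.
  by apply: leq_trans r_gt3; rewrite addSn !ltnS; case: (_ != _).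
case/card_gt1P=> c [d [c_out d_out neq_cd]]; exists c, d.
move: c_out d_out; rewrite !inE !negb_or ![_ == a]eq_sym ![_ == b]eq_sym.
by move=> /andP[-> ->] /andP[-> ->].
Qed.

Section DiagonalMonarchs.

Variables (X : finType) (k r : nat) (f : rfam X k r).
Variables (Y0 : kset X k) (u v : X).
Hypotheses (u_in : u \in val Y0) (v_in : v \in val Y0) (neq_uv : u != v).

Lemma diag_monarch_colour (S : {set 'I_r}) (a b c d s t : 'I_r) :
  (a \in S) = (b \in S) -> (c \in S) = (d \in S) ->
  diag_monarch f a b s -> diag_monarch f c d t -> (s \in S) = (t \in S).
Proof.
move=> Sab Scd fab fcd.
pose x := [tuple if p \in S then u else v | p < r].
have x_in : in_pow (val Y0) x by move=> p; rewrite tnth_mktuple; case: ifP.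
have := fab Y0 x x_in; have := fcd Y0 x x_in.
rewrite !tnth_mktuple Sab Scd => /(_ erefl) -> /(_ erefl).
by case: (s \in S); case: (t \in S) => // uv; move: neq_uv; rewrite uv eqxx.
Qed.

Hypothesis diag_mon :
  forall a b : 'I_r, a != b -> exists t, diag_monarch f a b t.

Lemma diag_monarch_off_pair (a b c d l : 'I_r) :
  diag_monarch f a b l -> l \notin [set a; b] ->
  c != d -> l \notin [set c; d] -> diag_monarch f c d l.
Proof.
move=> fab l_ab neq_cd l_cd; have [t fcd] := diag_mon neq_cd.
have := diag_monarch_colour (S := [set l]) _ _ fab fcd.
move: l_ab l_cd; rewrite !inE !(eq_sym l) eqxx.
move=> /norP[/negbTE-> /negbTE->] /norP[/negbTE-> /negbTE->] /(_ erefl erefl).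
by move/esym/eqP => <-.
Qed.

Lemma diag_monarch_at_pair (c d l b : 'I_r) :
  diag_monarch f c d l -> l \notin [set c; d] -> b \notin [set c; d] ->
  b != l -> diag_monarch f l b l.
Proof.
move=> fcd l_cd b_cd neq_bl.
have [t flb] : exists t, diag_monarch f l b t.
  by apply: diag_mon; rewrite eq_sym.
have := diag_monarch_colour (S := [set l; b]) _ _ fcd flb.
move: l_cd b_cd; rewrite !inE !(eq_sym c) !(eq_sym d) !eqxx orbT.
move=> /norP[/negbTE-> /negbTE->] /norP[/negbTE-> /negbTE->] /(_ erefl erefl).
move/esym/orP => t_lb Y x x_in xlb; rewrite (flb Y x x_in xlb).
by case: t_lb => /eqP ->.
Qed.

Hypothesis r_gt3 : 3 < r.

Lemma diag_monarch_everywhere (i j l : 'I_r) :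
  diag_monarch f i j l -> l \notin [set i; j] ->
  forall a b, a != b -> diag_monarch f a b l.
Proof.
move=> fij l_ij.
have at_l b : b != l -> diag_monarch f l b l.
  move=> neq_bl; have [c [d [neq_cd l_cd b_cd]]] := two_outside_pair l b r_gt3.
  apply: (diag_monarch_at_pair (c := c) (d := d)) => //.
  exact: diag_monarch_off_pair fij l_ij neq_cd l_cd.
move=> a b neq_ab.
have [a_l | neq_al] := eqVneq a l.
  by rewrite a_l; apply: at_l; rewrite eq_sym -a_l.
have [b_l | neq_bl] := eqVneq b l.
  by rewrite b_l; exact/diag_monarch_sym/at_l.
apply: diag_monarch_off_pair fij l_ij neq_ab _.
by rewrite !inE negb_or ![l == _]eq_sym neq_al neq_bl.
Qed.

Lemma exists_diag_monarch_off_pair :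
  exists i j l, diag_monarch f i j l /\ l \notin [set i; j].
Proof.
pose o : 'I_r := Ordinal r_gt3.
have [a [b [neq_ab _ _]]] := two_outside_pair o o r_gt3.
have [c [d [neq_cd a_cd b_cd]]] := two_outside_pair a b r_gt3.
have [s fab] := diag_mon neq_ab; have [t fcd] := diag_mon neq_cd.
have := diag_monarch_colour (S := [set c; d]) _ _ fab fcd.
rewrite (negbTE a_cd) (negbTE b_cd) set21 set22 => /(_ erefl erefl) st_cd.
have [t_cd | t_out] := boolP (t \in [set c; d]); last by exists c, d, t.
exists a, b, s; split=> //; rewrite -st_cd in t_cd.
apply/negP; rewrite !inE => /orP[] /eqP s_eq.
  by case/negP: a_cd; rewrite -s_eq.
by case/negP: b_cd; rewrite -s_eq.
Qed.

End DiagonalMonarchs.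

Section NonInjectiveTuples.

Variables (X : finType) (k : nat) (C : pred (cfun X k)).

Lemma monarchy_of_subsingletons r (f : rfam X k r) (t : 'I_r) :
  (forall Y : kset X k, #|val Y| <= 1) ->
  (forall (Y : kset X k) x, in_pow (val Y) x -> f Y x \in x) -> monarchy f.
Proof.
move=> small f_sel; exists t => Y x x_in.
case/tnthP: (f_sel Y x x_in) => p ->.
exact: (card_le1_eqP (small Y)) (x_in t) (x_in p).
Qed.

Lemma monarch_on_non_injective r : 3 < r -> is_rF C r ->
  forall f : rfam X k r, in_F C f ->
  exists l : 'I_r, forall (Y : kset X k) (a : r.-tuple X),
    in_pow (val Y) a -> ~~ uniq a -> f Y a = tnth a l.
Proof.
case: r => // n r_gt3 [_ [[f0 [[f0_sel _] not_mon0]] minimal]] f Ff.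
have [Y0 Y0_gt1] : exists Y0 : kset X k, 1 < #|val Y0|.
  have [Y0 ? | small] := pickP (fun Y : kset X k => 1 < #|val Y|).
    by exists Y0.
  case: not_mon0; apply: (monarchy_of_subsingletons ord0) => // Y.
  by rewrite leqNgt small.
have [u [v [u_in v_in neq_uv]]] := card_gt1P Y0_gt1.
have diag_mon a b : a != b -> exists t, diag_monarch f a b t.
  apply: exists_diag_monarch Ff => g; apply: minimal => //.
  by rewrite -ltnS ltnW.
have [i [j [l [fij l_ij]]]] :=
  exists_diag_monarch_off_pair u_in v_in neq_uv diag_mon r_gt3.
exists l => Y x x_in not_uniq.
have : ~~ injectiveb (tnth x).
  by apply: contra not_uniq => /injectiveP/tuple_uniqP.
case/injectivePn=> p [q neq_pq xpq].
exact: (diag_monarch_everywhere u_in v_in neq_uv diag_mon r_gt3 fij l_ij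
          neq_pq x_in xpq).
Qed.

Lemma monarchy_of_arity_gt r (f : rfam X k r) (l : 'I_r) : k < r ->
  (forall (Y : kset X k) (a : r.-tuple X),
     in_pow (val Y) a -> ~~ uniq a -> f Y a = tnth a l) ->
  monarchy f.
Proof.
move=> k_lt_r f_l; exists l => Y a a_in; apply: f_l => //.
apply: contraL k_lt_r => /card_uniqP card_a; rewrite -leqNgt -(eqP (valP Y)).
rewrite -{1}(size_tuple a) -card_a.
by apply/subset_leq_card/subsetP => _ /tnthP[p ->].
Qed.

End NonInjectiveTuples.

Theorem claim16p2 (X : finType) (k : nat) (C : pred (cfun X k)) (r : nat) :
  1 <= k -> k <= #|X| - 1 ->
  (forall c, C c -> is_choice c) ->
  (* standing assumption: every simple f in F is a monarchy *)
  (forall (r' : nat) (f : rfam X k r'), in_F C f -> simple f -> monarchy f) ->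
  is_rF C r -> 4 <= r ->
  (forall f : rfam X k r, in_F C f ->
     exists l : 'I_r, forall (Y : kset X k) (a : r.-tuple X),
       in_pow (val Y) a -> ~~ uniq a -> f Y a = tnth a l)
  /\ r <= k.
Proof.
move=> _ _ _ _ rF r_gt3.
have non_injective := monarch_on_non_injective r_gt3 rF.
split=> //; rewrite leqNgt; apply/negP => k_lt_r.
have [_ [[f0 [Ff0 not_mon0]] _]] := rF.
have [l f0_l] := non_injective f0 Ff0.
exact: not_mon0 (monarchy_of_arity_gt k_lt_r f0_l).
Qed.
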